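(* Optimum Stack Generation over an alphabet $\Sigma$ can be reduced to the scored parsing problem of a bounded-difference scored grammar in Chomsky normal form. The size of the grammar is polynomial in $|\Sigma|$, and the input string is not changed by the reduction.
   Context: Optimum Stack Generation: given a finite alphabet $\Sigma$ and a string $\sigma\in\Sigma^*$, starting from an empty stack, find the minimum length of a sequence of operations push$(c)$ ($c\in\Sigma$), emit (print the top symbol) and pop that prints exactly $\sigma$ and ends with an empty stack. A scored grammar is a CFG whose productions $p$ carry non-negative integer scores $s(p)$; $s(X,\sigma)$ is the minimum total score of a derivation $X\to^*\sigma$ ($\infty$ if none). It is $W$-bounded-difference if for every non-terminal $X$, terminal $x$, non-empty terminal string $\sigma$: $|s(X,\sigma)-s(X,\sigma x)|\le W$ and $|s(X,\sigma)-s(X,x\sigma)|\le W$; bounded-difference means $W=O(1)$. Chomsky normal form: productions $Z\to XY$, $Z\to c$, $S\to\varepsilon$ with $X,Y$ non-terminals different from the start symbol $S$. The scored parsing problem asks for $s(S,\sigma)$ for the start symbol $S$. *)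

From mathcomp Require Import all_boot.
Set Implicit Arguments. Unset Strict Implicit. Unset Printing Implicit Defensive.

Inductive stack_op (Sigma : Type) := Push of Sigma | Emit | Pop.
Arguments Emit {Sigma}. Arguments Pop {Sigma}.

(* [run st ops] executes [ops] from stack [st] (head = top of stack) and
   returns the final stack and the printed string; None if an emit or pop
   is performed on an empty stack. *)
Fixpoint run (Sigma : Type) (st : seq Sigma) (ops : seq (stack_op Sigma))
  : option (seq Sigma * seq Sigma) :=
  match ops with
  | [::] => Some (st, [::])
  | Push c :: ops' => run (c :: st) ops'
  | Emit :: ops' =>
      match st with
      | [::] => None
      | c :: _ => omap (fun p => (p.1, c :: p.2)) (run st ops')
      end
  | Pop :: ops' =>
      match st with
      | [::] => None
      | _ :: st' => run st' ops'
      end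
  end.

Definition generates (Sigma : Type) (ops : seq (stack_op Sigma)) (sigma : seq Sigma) :=
  run [::] ops = Some ([::], sigma).

Definition osg_opt (Sigma : Type) (sigma : seq Sigma) (m : nat) : Prop :=
  (exists ops, generates ops sigma /\ size ops = m) /\
  (forall ops, generates ops sigma -> m <= size ops).

Record scored_cnf (Sigma : Type) := ScoredCNF {
  nt : finType;
  start : nt;
  bin_prods : seq (nt * nt * nt * nat);       (* (Z, X, Y, s) : Z -> X Y, score s *)
  term_prods : seq (nt * Sigma * nat);        (* (Z, c, s)    : Z -> c,   score s *)
  eps_prod : option nat                       (* Some s : S -> eps, score s *)
}.

Definition is_cnf (Sigma : Type) (G : scored_cnf Sigma) : Prop :=
  forall Z X Y s, (Z, X, Y, s) \in bin_prods G -> X != start G /\ Y != start G.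

Inductive derives (Sigma : eqType) (G : scored_cnf Sigma) : nt G -> seq Sigma -> nat -> Prop :=
  | der_term Z c s : (Z, c, s) \in term_prods G -> @derives Sigma G Z [:: c] s
  | der_bin Z X Y s u v s1 s2 : (Z, X, Y, s) \in bin_prods G ->
      @derives Sigma G X u s1 -> @derives Sigma G Y v s2 -> @derives Sigma G Z (u ++ v) (s + s1 + s2)
  | der_eps s : eps_prod G = Some s -> @derives Sigma G (start G) [::] s.

Definition min_score (Sigma : eqType) (G : scored_cnf Sigma) (X : nt G) (w : seq Sigma) (m : nat) :=
  @derives _ G X w m /\ forall m', @derives _ G X w m' -> m <= m'.

Definition underivable (Sigma : eqType) (G : scored_cnf Sigma) (X : nt G) (w : seq Sigma) :=
  forall m, ~ @derives _ G X w m.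

(* |s(X,u) - s(X,v)| <= W, with the convention that two infinite values are
   within W of each other and an infinite and a finite value are not. *)
Definition score_close (Sigma : eqType) (G : scored_cnf Sigma) (W : nat) (X : nt G) (u v : seq Sigma) :=
  (@underivable _ G X u /\ @underivable _ G X v) \/
  (exists m1 m2, @min_score _ G X u m1 /\ @min_score _ G X v m2 /\ m1 <= m2 + W /\ m2 <= m1 + W).

Definition bounded_diff (Sigma : eqType) (W : nat) (G : scored_cnf Sigma) : Prop :=
  forall (X : nt G) (x : Sigma) (w : seq Sigma), w != [::] ->
    @score_close _ G W X w (rcons w x) /\ @score_close _ G W X w (x :: w).

Definition grammar_size (Sigma : Type) (G : scored_cnf Sigma) : nat :=
  #|nt G| + size (bin_prods G) + size (term_prods G) + (if eps_prod G is Some _ then 1 else 0).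

From Pilot Require Import Defs.
From mathcomp Require Import all_boot zify.
From Stdlib Require Import Classical.
From Stdlib Require Wf_nat.
Set Implicit Arguments. Unset Strict Implicit. Unset Printing Implicit Defensive.

(* Besides the start symbol [None], the grammar has a non-terminal [Some b] for
   every possible top of stack [b]: [Some (Some d)] stands for operation
   sequences that run above a stack whose top symbol is [d] and restore it,
   [Some None] for sequences that run above any stack.  Concatenating two pieces
   is free, running a [Some (Some d)] piece elsewhere costs [Push d] and [Pop],
   and a letter costs one [Emit] on a matching top, three operations otherwise.
   So derivations become operation sequences of the same length; conversely a
   sequence is parsed by cutting it at the [Pop] matching its first [Push] (or,
   if it starts by popping the top symbol [d], at its last [Push d]).  Inserting
   a letter costs three operations and deleting one costs none, whence bounded
   difference with W = 3. *)

Definition least (P : nat -> Prop) (m : nat) := P m /\ forall n, P n -> m <= n.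

Lemma least_exists (P : nat -> Prop) n : P n -> exists m, least P m.
Proof.
move=> Pn; have [m [[Pm minP] _]] := Wf_nat.dec_inh_nat_subset_has_unique_least_element P
  (fun k => classic (P k)) (ex_intro P n Pn).
by exists m; split=> // k /minP /leP.
Qed.

Lemma least_iff (P Q : nat -> Prop) m :
  (forall n, Q n -> P n) -> (forall n, P n -> exists2 k, k <= n & Q k) ->
  least P m <-> least Q m.
Proof.
move=> QP PQ; rewrite /least; split=> [[Pm minP] | [Qm minQ]].
- have [k le_km Qk] := PQ m Pm.
  have e_km : k = m by apply/eqP; rewrite eqn_leq le_km; exact/minP/QP.
  by subst k; split=> // n /QP /minP.
- split=> [|n /PQ [k le_kn /minQ le_mk]]; first exact: QP.
  exact: leq_trans le_mk le_kn.
Qed.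

Lemma score_close_transfer (Sigma : eqType) (G : scored_cnf Sigma) W X u v s0 :
  derives X u s0 ->
  (forall s, derives X u s -> exists2 s', s' <= s + W & derives X v s') ->
  (forall s, derives X v s -> exists2 s', s' <= s + W & derives X u s') ->
  @score_close _ G W X u v.
Proof.
move=> d0 uv vu; right.
have [m1 [d1 min1]] := least_exists d0.
have [s1 _ d1'] := uv _ d1; have [m2 [d2 min2]] := least_exists d1'.
exists m1, m2; split=> //; split=> //; split.
- by have [s le_s /min1] := vu _ d2; lia.
- by have [s le_s /min2] := uv _ d1; lia.
Qed.

Section StackMachine.
Variable Sigma : Type.
Implicit Types (st : seq Sigma) (ops : seq (stack_op Sigma)) (u v w : seq Sigma).

Lemma osg_optE w m :
  osg_opt w m <-> least (fun n => exists2 ops, generates ops w & size ops = n) m.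
Proof.
split=> [[[ops [gen_ops <-]] min_ops] | [[ops gen_ops <-] min_n]].
- by split=> [|n [ops' /min_ops le_m <-]]; first exists ops.
- by split=> [|ops' /(fun g => min_n _ (ex_intro2 _ _ ops' g erefl))]; first exists ops.
Qed.

Lemma run_cat st o1 o2 : run st (o1 ++ o2) =
  obind (fun p => omap (fun q => (q.1, p.2 ++ q.2)) (run p.1 o2)) (run st o1).
Proof.
elim: o1 st => [|[c| |] o IH] st /=.
- by case: (run st o2) => [[]|].
- exact: IH.
- case: st => [|h t] //=; rewrite IH; case: (run (h :: t) o) => [[st1 w1]|] //=.
  by case: (run st1 o2) => [[]|].
- by case: st.
Qed.

Definition spell u : seq (stack_op Sigma) := flatten [seq [:: Push c; Emit; Pop] | c <- u].

Lemma run_spell st u : run st (spell u) = Some (st, u).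
Proof. by elim: u => //= c u IH; rewrite IH. Qed.

Lemma run_delete_letter st st' ops u x v :
  run st ops = Some (st', u ++ x :: v) ->
  exists2 ops', size ops' < size ops & run st ops' = Some (st', u ++ v).
Proof.
elim: ops st u => [|[c| |] o IH] st u /=.
- by case=> _; case: u.
- by case/IH=> o' lt_o' r'; exists (Push c :: o').
- case: st => [|h t] //; case E: (run (h :: t) o) => [[st1 w1]|] //= [e_st1 e_w].
  subst st1; case: u e_w => [|h' u] /= [e_h e_w1]; subst; first by exists o.
  have [o' lt_o' r'] := IH _ u E.
  by exists (Emit :: o'); rewrite /= ?r'.
- by case: st => [|h t] // /IH [o' lt_o' r']; exists (Pop :: o').
Qed.

Lemma run_split_pop p e st st' ops w :
  run (p ++ e :: st) ops = Some (st', w) -> size st' <= size st ->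
  exists o1 o2 w1 w2, [/\ ops = o1 ++ Pop :: o2, run (rcons p e) o1 = Some ([:: e], w1),
    run st o2 = Some (st', w2) & w = w1 ++ w2].
Proof.
elim: ops p w => [|[c| |] o IH] p w /=.
- by case=> <- _; rewrite size_cat /=; lia.
- move=> r le_st; have [o1 [o2 [w1 [w2 [-> r1 r2 ->]]]]] := IH (c :: p) w r le_st.
  by exists (Push c :: o1), o2, w1, w2.
- case: p => [|h p] /=.
  + case E: (run (e :: st) o) => [[st1 w1']|] //= [e_st1 <-] le_st; subst st1.
    have [o1 [o2 [w1 [w2 [-> r1 r2 ->]]]]] := IH [::] _ E le_st.
    by exists (Emit :: o1), o2, (e :: w1), w2; rewrite /= r1.
  + case E: (run (h :: p ++ e :: st) o) => [[st1 w1']|] //= [e_st1 <-] le_st; subst st1.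
    have [o1 [o2 [w1 [w2 [-> r1 r2 ->]]]]] := IH (h :: p) _ E le_st.
    by exists (Emit :: o1), o2, (h :: w1), w2; rewrite /= r1.
- case: p => [|h p] /=; first by move=> r le_st; exists [::], o, [::], w.
  move=> r le_st; have [o1 [o2 [w1 [w2 [-> r1 r2 ->]]]]] := IH p w r le_st.
  by exists (Pop :: o1), o2, w1, w2.
Qed.

Lemma run_split_push d q ops w :
  run [::] ops = Some (rcons q d, w) ->
  exists o1 o2 w1 w2, [/\ ops = o1 ++ Push d :: o2, run [::] o1 = Some ([::], w1),
    run [:: d] o2 = Some (rcons q d, w2) & w = w1 ++ w2].
Proof.
elim/last_ind: ops q w => [|o x IH] q w; first by case; case: q.
rewrite -cats1 run_cat; case E: (run [::] o) => [[st1 w1]|] //=.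
case: x => [c| |] /=.
- case: q => [|c' q] /= [e_c e_st1 <-]; subst c st1.
  + by exists o, [::], w1, [::]; rewrite cats0.
  + have [o1 [o2 [w3 [w4 [-> r1 r2 ->]]]]] := IH q w1 E.
    exists o1, (rcons o2 (Push c')), w3, w4; rewrite -cats1 -catA cats0.
    by split=> //; rewrite run_cat r2 /= cats0.
- case: st1 E => [|h t] E //= [e_st <-]; rewrite e_st in E.
  have [o1 [o2 [w3 [w4 [-> r1 r2 ->]]]]] := IH q w1 E.
  exists o1, (rcons o2 Emit), w3, (w4 ++ [:: h]); rewrite -cats1 -!catA.
  by split=> //; rewrite run_cat r2 /= -e_st.
- case: st1 E => [|h t] E //= [e_t <-]; subst t.
  have [o1 [o2 [w3 [w4 [-> r1 r2 ->]]]]] := IH (h :: q) w1 E.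
  exists o1, (rcons o2 Pop), w3, w4; rewrite -cats1 -catA cats0.
  by split=> //; rewrite run_cat r2 /= cats0.
Qed.

Definition prints_over (bot : seq Sigma) ops w :=
  forall st, run (bot ++ st) ops = Some (bot ++ st, w).

Lemma prints_over_cat bot o1 o2 u v :
  prints_over bot o1 u -> prints_over bot o2 v -> prints_over bot (o1 ++ o2) (u ++ v).
Proof. by move=> r1 r2 st; rewrite run_cat r1 /= r2. Qed.

Lemma prints_over_push e bot ops w :
  prints_over [:: e] ops w -> prints_over bot (Push e :: ops ++ [:: Pop]) w.
Proof. by move=> r st; rewrite /= run_cat (r (bot ++ st)) /= cats0. Qed.

End StackMachine.

Section OsgGrammar.
Variable Sigma : finType.
Local Notation N := (option (option Sigma)).
Implicit Types (Z X : N) (b : option Sigma) (ops : seq (stack_op Sigma)) (w : seq Sigma).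

Definition bin_score Z b : nat := if (Z == Some b) || (b == None) then 0 else 2.
Definition term_score Z (c : Sigma) : nat := if Z == Some (Some c) then 1 else 3.

Definition osg_bins : seq (N * N * N * nat) :=
  [seq (Z, Some b, Some b, bin_score Z b) | Z <- enum {: N}, b <- enum {: option Sigma}].
Definition osg_terms : seq (N * Sigma * nat) :=
  [seq (Z, c, term_score Z c) | Z <- enum {: N}, c <- enum Sigma].

Definition osg_grammar : scored_cnf Sigma := ScoredCNF None osg_bins osg_terms (Some 0).
Local Notation G := osg_grammar.
Local Notation derives := (@Defs.derives _ osg_grammar).

Lemma mem_osg_bins Z X Y s : (Z, X, Y, s) \in osg_bins ->
  exists b, [/\ X = Some b, Y = Some b & s = bin_score Z b].
Proof. by case/allpairsP=> [[Z' b] [_ _ /= [-> -> -> ->]]]; exists b. Qed.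

Lemma osg_bins_mem Z b : (Z, Some b, Some b, bin_score Z b) \in osg_bins.
Proof. by apply/allpairsP; exists (Z, b); rewrite !mem_enum. Qed.

Lemma mem_osg_terms Z c s : (Z, c, s) \in osg_terms -> s = term_score Z c.
Proof. by case/allpairsP=> [[Z' c'] [_ _ /= [-> -> ->]]]. Qed.

Lemma osg_terms_mem Z c : (Z, c, term_score Z c) \in osg_terms.
Proof. by apply/allpairsP; exists (Z, c); rewrite !mem_enum. Qed.

Lemma osg_grammar_cnf : is_cnf G.
Proof. by move=> Z X Y s /mem_osg_bins [b [-> -> _]]. Qed.

Lemma osg_grammar_size : grammar_size G <= 5 * (#|Sigma| + 1) ^ 2.
Proof.
by rewrite /grammar_size /= !size_allpairs -!cardE !card_option; move: #|Sigma| => n; nia.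
Qed.

Definition bottom X : seq Sigma := if X is Some b then seq_of_opt b else [::].

Lemma derives_prints_over X w s :
  derives X w s -> exists2 ops, prints_over (bottom X) ops w & size ops = s.
Proof.
elim=> {X w s} [Z c _ /mem_osg_terms -> | Z _ _ _ u v s1 s2 /mem_osg_bins [b [-> -> ->]]
  _ [o1 r1 <-] _ [o2 r2 <-] | _ [<-]]; last by exists [::].
- rewrite /term_score; case: eqP => [-> | _]; first by exists [:: Emit].
  by exists (spell [:: c]) => // st; rewrite run_spell.
- rewrite /bin_score; case: ifP => [/orP same_or_free | ].
  + have lift o w : prints_over (bottom (Some b)) o w -> prints_over (bottom Z) o w.
      by case: same_or_free => /eqP -> // r st; apply: r.
    by exists (o1 ++ o2); [apply: prints_over_cat; apply: lift | rewrite size_cat].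
  + case: b r1 r2 => [e|] r1 r2; rewrite ?orbT // => _.
    exists (Push e :: (o1 ++ o2) ++ [:: Pop]); first exact/prints_over_push/prints_over_cat.
    by rewrite /= !size_cat addnC.
Qed.

Definition generates_from X ops w := run (bottom X) ops = Some (bottom X, w).

Lemma derives_sound X w s :
  derives X w s -> exists2 ops, generates_from X ops w & size ops = s.
Proof.
case/derives_prints_over=> ops r <-; exists ops => //.
by rewrite /generates_from -[bottom X]cats0.
Qed.

Lemma term_score_reroot Z b c : term_score Z c <= term_score (Some b) c + bin_score Z b.
Proof.
rewrite /term_score /bin_score; case: (Z =P Some b) => [-> | _]; first by rewrite addn0.
by case: (b =P None) => [-> | _] /=; do !case: ifP.
Qed.

Lemma bin_score_reroot Z b b' : bin_score Z b' <= bin_score (Some b) b' + bin_score Z b.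
Proof.
rewrite /bin_score; case: b' => [d|]; last by rewrite eqxx !orbT.
rewrite !orbF; have [->|nZb] := eqVneq Z (Some b); first by rewrite addn0.
by case: b nZb => [e|] nZb /=; rewrite ?eqxx ?addn0 ?addn2; case: ifP.
Qed.

Lemma derives_reroot b Z w s :
  derives (Some b) w s -> exists2 s', s' <= s + bin_score Z b & derives Z w s'.
Proof.
move e_X: (Some b) => X d; case: d e_X => [_ c _ /mem_osg_terms -> <- | _ _ _ _ u v s1 s2
  /mem_osg_bins [b' [-> -> ->]] d1 d2 <- | //].
- by exists (term_score Z c); [exact: term_score_reroot | apply/der_term/osg_terms_mem].
- exists (bin_score Z b' + s1 + s2); last exact: (@der_bin _ G) (osg_bins_mem Z b') d1 d2.
  by have := bin_score_reroot Z b b'; lia.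
Qed.

Lemma derives_emit d : derives (Some (Some d)) [:: d] 1.
Proof.
by have := (@der_term _ G) _ _ _ (osg_terms_mem (Some (Some d)) d); rewrite /term_score eqxx.
Qed.

(* The empty word is admitted although only the start symbol derives it: this
   makes [derivable_le] closed under concatenation. *)
Definition derivable_le X w n := w = [::] \/ exists2 s, s <= n & derives X w s.

Lemma derivable_le_mono X w n n' : n <= n' -> derivable_le X w n -> derivable_le X w n'.
Proof.
by move=> le_n [-> | [s le_s d]]; [left | right; exists s => //; apply: leq_trans le_n].
Qed.

Lemma derivable_le_reroot b Z w n :
  derivable_le (Some b) w n -> derivable_le Z w (n + bin_score Z b).
Proof.
case=> [-> | [s le_s /(derives_reroot Z) [s' le_s' d]]]; [by left | right; exists s' => //].
by apply: leq_trans le_s' _; rewrite leq_add2r.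
Qed.

Lemma derivable_le_cat b w1 w2 n1 n2 :
  derivable_le (Some b) w1 n1 -> derivable_le (Some b) w2 n2 ->
  derivable_le (Some b) (w1 ++ w2) (n1 + n2).
Proof.
case=> [-> | [s1 le_s1 d1]]; first by apply: derivable_le_mono; rewrite leq_addl.
case=> [-> | [s2 le_s2 d2]].
  by rewrite cats0; apply: derivable_le_mono (leq_addr _ _) _; right; exists s1.
right; exists (bin_score (Some b) b + s1 + s2).
- by rewrite /bin_score eqxx /=; lia.
- exact: (@der_bin _ G) (osg_bins_mem _ b) d1 d2.
Qed.

Lemma derivable_le_of_run b ops w :
  run (seq_of_opt b) ops = Some (seq_of_opt b, w) -> derivable_le (Some b) w (size ops).
Proof.
have [n] := ubnP (size ops); elim: n => // n IH in b ops w *; rewrite ltnS => le_ops.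
case: ops le_ops => [|[e| |] o] /= le_o; first by case=> <-; left.
- move=> r; have [o1 [o2 [w1 [w2 [e_o r1 r2 ->]]]]] := run_split_pop (p := [::]) r (leqnn _).
  rewrite e_o size_cat /= in le_o *.
  have d1 := derivable_le_reroot (Some b) (IH (Some e) o1 w1 ltac:(lia) r1).
  apply: derivable_le_mono (derivable_le_cat d1 (IH b o2 w2 ltac:(lia) r2)).
  by rewrite /bin_score; case: ifP; lia.
- case: b => [d|] //=; case E: (run [:: d] o) => [[st w']|] //= [e_st <-]; subst st.
  have d_emit : derivable_le (Some (Some d)) [:: d] 1 by right; exists 1; last exact: derives_emit.
  exact: derivable_le_cat d_emit (IH (Some d) o w' ltac:(lia) E).
- case: b => [d|] //= /(@run_split_push _ d [::]) [o1 [o2 [w1 [w2 [e_o r1 r2 ->]]]]].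
  rewrite e_o size_cat /= in le_o *.
  have d1 := derivable_le_reroot (Some (Some d)) (IH None o1 w1 ltac:(lia) r1).
  apply: derivable_le_mono (derivable_le_cat d1 (IH (Some d) o2 w2 ltac:(lia) r2)).
  by rewrite /bin_score orbT; lia.
Qed.

Lemma derivable_le_of_generates X ops w : generates_from X ops w -> derivable_le X w (size ops).
Proof.
case: X => [b|]; first exact: derivable_le_of_run.
by move/(derivable_le_of_run (b := None))/(derivable_le_reroot None); rewrite addn0.
Qed.

Lemma derives_complete X ops w : generates_from X ops w -> w != [::] ->
  exists2 s, s <= size ops & derives X w s.
Proof. by case/derivable_le_of_generates=> [-> | [s le_s d] _] //; exists s. Qed.

Lemma derives_start_complete ops w : generates ops w ->
  exists2 s, s <= size ops & derives None w s.
Proof.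
case/(derivable_le_of_generates (X := None))=> [-> | //].
by exists 0 => //; apply: (@der_eps _ G).
Qed.

Lemma derives_transfer X u v k : v != [::] ->
  (forall ops, generates_from X ops u ->
     exists2 ops', generates_from X ops' v & size ops' <= size ops + k) ->
  forall s, derives X u s -> exists2 s', s' <= s + k & derives X v s'.
Proof.
move=> v_nz transfer s /derives_sound [ops /transfer [ops' gen' le_ops'] <-].
have [s' le_s' d'] := derives_complete gen' v_nz.
by exists s' => //; apply: leq_trans le_s' le_ops'.
Qed.

Lemma osg_bounded_diff : bounded_diff 3 G.
Proof.
move=> X x w w_nz.
have [s0 _ d0] := derives_complete (run_spell (bottom X) w) w_nz.
have append ops : generates_from X ops w ->
    exists2 ops', generates_from X ops' (rcons w x) & size ops' <= size ops + 3.
  move=> r; exists (ops ++ spell [:: x]); last by rewrite size_cat.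
  by rewrite /generates_from run_cat r /= cats1.
have prepend ops : generates_from X ops w ->
    exists2 ops', generates_from X ops' (x :: w) & size ops' <= size ops + 3.
  move=> r; exists (spell [:: x] ++ ops); last by rewrite size_cat addnC.
  by rewrite /generates_from /= r.
have delete u v ops : generates_from X ops (u ++ x :: v) ->
    exists2 ops', generates_from X ops' (u ++ v) & size ops' <= size ops + 3.
  by move=> r; have [ops' lt_ops' r'] := run_delete_letter r; exists ops' => //; lia.
have rcons_nz : rcons w x != [::] by case: (w).
split; apply: (score_close_transfer d0); apply: derives_transfer => //.
- by move=> ops; have := delete w [::] ops; rewrite cats0 cats1.
- exact: delete [::] w.
Qed.

End OsgGrammar.

Theorem proposition2 :
  exists (W c k : nat), forall Sigma : finType,
    exists G : scored_cnf Sigma,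
      [/\ is_cnf G,
          bounded_diff W G,
          grammar_size G <= c * (#|Sigma| + 1) ^ k
        & forall (sigma : seq Sigma) (m : nat),
            osg_opt sigma m <-> @min_score _ G (start G) sigma m].
Proof.
exists 3, 5, 2 => Sigma; exists (osg_grammar Sigma); split.
- exact: osg_grammar_cnf.
- exact: osg_bounded_diff.
- exact: osg_grammar_size.
- move=> sigma m; rewrite osg_optE; apply: least_iff => n.
  + by case/derives_sound=> ops gen_ops <-; exists ops.
  + by case=> ops /derives_start_complete le_s <-.
Qed.
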